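(* Let $\mathcal{L}$ be an algebraic system and let $\mathbf{STop}\mathcal{L}$ be the category of semitopological $\mathcal{L}$-structures and continuous $\mathcal{L}$-homomorphisms. Let $\mathcal{C}$ be an epireflective subcategory of $\mathbf{Top}$. For each $(\mathfrak U,X)\in\mathbf{STop}\mathcal{L}$, endow $\mathrm{r}_{\mathcal C}X$ with the $\mathcal{L}$-structure $\mathfrak V$ given by $c_{\mathfrak V}=\mathrm{r}_{(X,\mathcal C)}(c_{\mathfrak U})$ for constants and $\Phi_{\mathfrak V}(\mathrm{r}_{(X,\mathcal C)}(x_1),\dots,\mathrm{r}_{(X,\mathcal C)}(x_n))=\mathrm{r}_{(X,\mathcal C)}(\Phi_{\mathfrak U}(x_1,\dots,x_n))$ for $n$-ary function symbols $\Phi$ (this is well defined, separately continuous, and makes $\mathrm{r}_{(X,\mathcal C)}$ an $\mathcal L$-homomorphism). Then the class $\mathrm{r}_{\mathcal C}(\mathbf{STop}\mathcal{L})$ of these structures $(\mathfrak V,\mathrm{r}_{\mathcal C}X)$ is an epireflective subcategory of $\mathbf{STop}\mathcal{L}$, with reflection arrows $\mathrm{r}_{(X,\mathcal C)}$; in particular for every continuous $\mathcal L$-homomorphism $f\colon X\to Y$ in $\mathbf{STop}\mathcal{L}$, the induced map $\mathrm{r}_{\mathcal C}(f)\colon \mathrm{r}_{\mathcal C}X\to\mathrm{r}_{\mathcal C}Y$ is an $\mathcal L$-homomorphism.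
   Context: An epireflective subcategory $\mathcal C$ of $\mathbf{Top}$ is a full, isomorphism-closed subcategory closed under products and subspaces; for each space $X$ there is $\mathrm{r}_{\mathcal C}X\in\mathcal C$ and a continuous surjection $\mathrm{r}_{(X,\mathcal C)}\colon X\to\mathrm{r}_{\mathcal C}X$ such that every continuous map from $X$ into a space of $\mathcal C$ factors uniquely through it; $\mathrm{r}_{\mathcal C}(f)$ denotes the unique continuous map with $\mathrm{r}_{\mathcal C}(f)\circ\mathrm{r}_{(X,\mathcal C)}=\mathrm{r}_{(Y,\mathcal C)}\circ f$. An algebraic system $\mathcal L$ consists of constant symbols, function symbols each of finite arity $n\ge1$, and a set of equations. An $\mathcal L$-structure $\mathfrak U$ is a set $X$ with interpretations $c_{\mathfrak U}\in X$ and $\Phi_{\mathfrak U}\colon X^n\to X$ satisfying the equations. A semitopological $\mathcal L$-structure is an $\mathcal L$-structure with a topology making every $\Phi_{\mathfrak U}$ separately continuous (continuous in each variable when the others are fixed). An $\mathcal L$-homomorphism preserves constants and operations. *)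

From HB Require Import structures.
From mathcomp Require Import all_boot all_order all_algebra.
From mathcomp Require Import all_classical all_reals topology.
Set Implicit Arguments. Unset Strict Implicit. Unset Printing Implicit Defensive.
Local Open Scope classical_set_scope.

Record signature := Signature {
  csym : Type;
  fsym : Type;
  arity : fsym -> nat;
  arity_pos : forall f, (0 < arity f)%N }.

Inductive term (S : signature) : Type :=
  | Var : nat -> term S
  | Cst : csym S -> term S
  | App : forall f : fsym S, ('I_(arity f) -> term S) -> term S.

Record algsys := AlgSys {
  sig_of :> signature;
  eqns : term sig_of -> term sig_of -> Prop }.

Record interp (L : signature) (X : Type) := Interp {
  icst : csym L -> X;
  ifun : forall f : fsym L, ('I_(arity f) -> X) -> X }.
Arguments icst {L X} i c : rename.
Arguments ifun {L X} i f a : rename.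
Arguments App {S} f a.

Fixpoint eval (L : signature) (X : Type) (U : interp L X) (v : nat -> X)
    (t : term L) : X :=
  match t with
  | Var n => v n
  | Cst c => icst U c
  | App f a => ifun U f (fun i => eval U v (a i))
  end.

Definition is_lstruct (L : algsys) (X : Type) (U : interp L X) : Prop :=
  forall t1 t2 : term L, eqns t1 t2 -> forall v : nat -> X, eval U v t1 = eval U v t2.

Definition upd (n : nat) (X : Type) (a : 'I_n -> X) (i : 'I_n) (x : X) : 'I_n -> X :=
  fun j => if j == i then x else a j.

Definition is_semitop (L : algsys) (X : topologicalType) (U : interp L X) : Prop :=
  is_lstruct U /\
  forall (f : fsym L) (a : 'I_(arity f) -> X) (i : 'I_(arity f)),
    continuous (fun x : X => ifun U f (upd a i x)).

Definition is_hom (L : signature) (X Y : Type) (U : interp L X) (W : interp L Y)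
    (h : X -> Y) : Prop :=
  (forall c, h (icst U c) = icst W c) /\
  (forall f (a : 'I_(arity f) -> X), h (ifun U f a) = ifun W f (h \o a)).

Definition is_onto (A B : Type) (f : A -> B) : Prop := forall y : B, exists x : A, f x = y.

(** C is a class of spaces, rC X is the reflection of X and r X the reflection
    arrow. *)
Record epireflective (C : topologicalType -> Prop)
    (rC : topologicalType -> topologicalType) (r : forall X : topologicalType, X -> rC X) : Prop := {
  epi_iso_closed : forall (X Y : topologicalType) (f : X -> Y) (g : Y -> X),
      continuous f -> continuous g -> cancel f g -> cancel g f -> C X -> C Y;
  epi_prod_closed : forall (I : Type) (T : I -> topologicalType),
      (forall i, C (T i)) -> C (prod_topology T);
  epi_sub_closed : forall (X : topologicalType) (A : set X),
      C X -> C (set_type A);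
  epi_refl_in : forall X, C (rC X);
  epi_refl_cont : forall X, continuous (r X);
  epi_refl_surj : forall X, is_onto (r X);
  epi_refl_univ : forall (X Z : topologicalType) (g : X -> Z),
      C Z -> continuous g ->
      exists! h : rC X -> Z, continuous h /\ h \o r X = g }.

Definition induced (L : signature) (X Z : Type) (U : interp L X) (rx : X -> Z)
    (V : interp L Z) : Prop :=
  (forall c, icst V c = rx (icst U c)) /\
  (forall f (a : 'I_(arity f) -> X), ifun V f (rx \o a) = rx (ifun U f a)).

(** The kernel of the reflection arrow [r X] is a congruence for every
    separately continuous operation: fixing all arguments but one, the
    operation followed by [r X] is a continuous map into a space of [C], hence
    factors through [r X], so replacing one argument by an [r X]-equivalent one
    does not change the class of the result; replacing the arguments one at a
    time handles all of them.  Everything else transfers along the surjection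
    [r X]: equations, homomorphisms factoring through it, and (again by the
    universal property) separate continuity of the induced operations. *)

From Pilot Require Import Defs.
From HB Require Import structures.
From mathcomp Require Import all_boot all_order all_algebra.
From mathcomp Require Import all_classical all_reals topology.

Set Implicit Arguments.
Unset Strict Implicit.
Unset Printing Implicit Defensive.

Definition ifun_compatible (L : signature) (X Z : Type) (U : interp L X)
    (rx : X -> Z) : Prop :=
  forall f (a b : 'I_(arity f) -> X),
    rx \o a = rx \o b -> rx (ifun U f a) = rx (ifun U f b).

Lemma upd_comp (n : nat) (X Z : Type) (h : X -> Z) (a : 'I_n -> X) (i : 'I_n)
    (x : X) : h \o upd a i x = upd (h \o a) i (h x).
Proof. by apply: funext => j; rewrite /upd /=; case: eqP. Qed.

Lemma upd_invariant_eq (n : nat) (X Y Z : Type) (k : X -> Z)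
    (F : ('I_n -> X) -> Y) :
  (forall a i x y, k x = k y -> F (upd a i x) = F (upd a i y)) ->
  forall a b, k \o a = k \o b -> F a = F b.
Proof.
move=> Fupd a b kab.
pose c (m : nat) (j : 'I_n) := if (j < m)%N then b j else a j.
have c0 : c 0%N = a by apply: funext.
have cn : c n = b by apply: funext => j; rewrite /c ltn_ord.
suff Fc m : (m <= n)%N -> F a = F (c m) by rewrite -cn; apply: Fc.
elim: m => [|m IH] lt_mn; first by rewrite c0.
rewrite IH ?(ltnW lt_mn) //.
pose i := Ordinal lt_mn.
have upd_a : c m = upd (c m) i (a i).
  by apply: funext => j; rewrite /upd /c; case: eqP => [->|] //=; rewrite ltnn.
have upd_b : c m.+1 = upd (c m) i (b i).
  apply: funext => j; rewrite /upd /c.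
  have -> : (j == i) = (nat_of_ord j == m) by apply/eqP/eqP => [->|?] //; apply: val_inj.
  case: (ltngtP j m) => [lt_jm|lt_mj|eq_jm].
  - by rewrite ltnS (ltnW lt_jm).
  - by rewrite ltnS leqNgt lt_mj.
  - by rewrite eq_jm ltnSn; congr b; apply: val_inj.
by rewrite upd_a upd_b; apply: Fupd; exact: (congr1 (fun g => g i) kab).
Qed.

Section Induced.

Variables (L : signature) (X Z : Type) (U : interp L X) (rx : X -> Z).
Hypothesis rx_onto : is_onto rx.

Lemma onto_lift (I : Type) (b : I -> Z) : exists a : I -> X, rx \o a = b.
Proof.
have [a ra] := choice (fun i => rx_onto (b i)).
by exists a; apply: funext => i; exact: ra.
Qed.

Lemma induced_exists : ifun_compatible U rx -> exists V, induced U rx V.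
Proof.
move=> compat.
have [s sK] := choice rx_onto.
exists (Interp (fun c => rx (icst U c)) (fun f b => rx (ifun U f (s \o b)))).
split=> //= f a; apply: compat; apply: funext => i /=; exact: sK.
Qed.

Variable V : interp L Z.
Hypothesis UV : induced U rx V.

Lemma eval_induced (w : nat -> X) (t : term L) :
  Defs.eval V (rx \o w) t = rx (Defs.eval U w t).
Proof.
elim: t => [n|c|f a IH] /=; [by []|exact: UV.1|].
rewrite -UV.2; congr (ifun V f); apply: funext => i; exact: IH.
Qed.

Lemma induced_hom : is_hom U V rx.
Proof. by case: UV => Ucst Ufun; split => [c|f a]; rewrite ?Ucst ?Ufun. Qed.

Lemma induced_hom_factor (Y : Type) (W : interp L Y) (g : X -> Y) (h : Z -> Y) :
  is_hom U W g -> h \o rx = g -> is_hom V W h.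
Proof.
move=> [gcst gfun] hrx; have hrxE x : h (rx x) = g x by rewrite -hrx.
split=> [c|f b]; first by rewrite UV.1 hrxE gcst.
have [a <-] := onto_lift b.
by rewrite UV.2 hrxE gfun -hrx.
Qed.

End Induced.

Lemma induced_lstruct (L : algsys) (X Z : Type) (U : interp L X) (rx : X -> Z)
    (V : interp L Z) :
  is_onto rx -> induced U rx V -> is_lstruct U -> is_lstruct V.
Proof.
move=> rx_onto UV Ueq t1 t2 eq12 v; have [w <-] := onto_lift rx_onto v.
by rewrite !(eval_induced UV) (Ueq t1 t2 eq12).
Qed.

Lemma is_hom_comp (L : signature) (X Y Z : Type) (U : interp L X)
    (W : interp L Y) (V : interp L Z) (g : X -> Y) (h : Y -> Z) :
  is_hom U W g -> is_hom W V h -> is_hom U V (h \o g).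
Proof.
move=> [gcst gfun] [hcst hfun].
by split=> [c|f a] /=; rewrite ?gcst ?hcst // gfun hfun.
Qed.

Section Reflection.

Variables (C : topologicalType -> Prop) (rC : topologicalType -> topologicalType)
  (r : forall X : topologicalType, X -> rC X).
Arguments r : clear implicits.
Hypothesis HC : @epireflective C rC r.

Lemma refl_continuous_eq (X Z : topologicalType) (g : X -> Z) :
  C Z -> continuous g -> forall x y : X, r X x = r X y -> g x = g y.
Proof.
move=> CZ gc x y rxy.
have [h [[_ hr] _]] := epi_refl_univ HC CZ gc.
by rewrite -hr /= rxy.
Qed.

Lemma continuous_refl (X Z : topologicalType) (F : rC X -> Z) :
  C Z -> continuous (F \o r X) -> continuous F.
Proof.
move=> CZ Frc; have [h [[hc hr] _]] := epi_refl_univ HC CZ Frc.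
suff -> : F = h by [].
apply: funext => y; have [x <-] := epi_refl_surj HC y.
by rewrite -[F _]/((F \o r X) x) -hr.
Qed.

Lemma continuous_upd_refl (L : algsys) (X : topologicalType) (U : interp L X) f
    (a : 'I_(arity f) -> X) (i : 'I_(arity f)) :
  is_semitop U -> continuous (fun x => r X (ifun U f (upd a i x))).
Proof.
move=> [_ Ucont] x; apply: (continuous_comp (Ucont f a i x)).
exact: epi_refl_cont HC _ _.
Qed.

Lemma refl_compatible (L : algsys) (X : topologicalType) (U : interp L X) :
  is_semitop U -> ifun_compatible U (r X).
Proof.
move=> Usemi f; apply: upd_invariant_eq => a i x y rxy.
  exact: refl_continuous_eq (epi_refl_in HC X) (continuous_upd_refl Usemi) _ _ rxy.
Qed.

Lemma induced_semitop (L : algsys) (X : topologicalType) (U : interp L X)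
    (V : interp L (rC X)) :
  is_semitop U -> induced U (r X) V -> is_semitop V.
Proof.
move=> Usemi UV; split; first exact: induced_lstruct (epi_refl_surj HC (X:=X)) UV Usemi.1.
move=> f b i; apply: continuous_refl (epi_refl_in HC X) _.
have [a <-] := onto_lift (epi_refl_surj HC (X:=X)) b.
have -> : (fun y => ifun V f (upd (r X \o a) i y)) \o r X =
          (fun x => r X (ifun U f (upd a i x))).
  by apply: funext => x /=; rewrite -upd_comp UV.2.
exact: continuous_upd_refl.
Qed.

End Reflection.

Theorem theorem3p10 (L : algsys) (C : topologicalType -> Prop)
    (rC : topologicalType -> topologicalType) (r : forall X : topologicalType, X -> rC X)
    (HC : @epireflective C rC r) :
  (* the induced structure exists (well defined) and is semitopological *)
  (forall (X : topologicalType) (U : interp L X), is_semitop U ->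
     exists V : interp L (rC X), induced U (r X) V) /\
  (forall (X : topologicalType) (U : interp L X) (V : interp L (rC X)),
     is_semitop U -> induced U (r X) V ->
     [/\ is_semitop V,
         (* r_(X,C) is a continuous surjective L-homomorphism (epi reflection arrow) *)
         is_hom U V (r X), continuous (r X) /\ is_onto (r X),
         (* the object (V, rC X) lies in the class (its space lies in C) *)
         C (rC X) &
         (* universal property in STopL w.r.t. objects whose space is in C *)
         forall (Y : topologicalType) (W : interp L Y) (g : X -> Y),
           C Y -> is_semitop W -> continuous g -> is_hom U W g ->
           exists! h : rC X -> Y, [/\ continuous h, is_hom V W h & h \o r X = g]]) /\
  (* r_C(f) is an L-homomorphism *)
  (forall (X Y : topologicalType) (U : interp L X) (W : interp L Y)
          (VX : interp L (rC X)) (VY : interp L (rC Y)) (f : X -> Y)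
          (rf : rC X -> rC Y),
     is_semitop U -> is_semitop W -> induced U (r X) VX -> induced W (r Y) VY ->
     continuous f -> is_hom U W f ->
     continuous rf -> rf \o r X = r Y \o f ->
     is_hom VX VY rf).
Proof.
split; [|split].
- move=> X U Usemi.
  exact: induced_exists (epi_refl_surj HC (X:=X)) (refl_compatible HC Usemi).
- move=> X U V Usemi UV; split.
  + exact: (induced_semitop HC Usemi UV).
  + exact: (induced_hom UV).
  + by split; [exact: (epi_refl_cont HC (X:=X)) | exact: (epi_refl_surj HC (X:=X))].
  + exact: epi_refl_in HC X.
  + move=> Y W g CY _ gc ghom.
    have [h [[hc hr] h_uniq]] := epi_refl_univ HC CY gc.
    exists h; split.
      split; [exact: hc | exact: (induced_hom_factor (epi_refl_surj HC (X:=X)) UV ghom hr) | exact: hr].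
    by move=> h' [h'c _ h'r]; apply: h_uniq.
- move=> X Y U W VX VY f rf _ _ UVX WVY _ fhom _ rfr.
  have rYf_hom := is_hom_comp fhom (induced_hom WVY).
  exact: (induced_hom_factor (epi_refl_surj HC (X:=X)) UVX rYf_hom rfr).
Qed.
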